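(* If there exists a ring satisfying (NK), then there exists a ring $A$ which is an algebra over either $\mathbb Z$ or $\mathbb Z_p$ for some prime number $p$, which is generated as such an algebra by two principally nilpotent elements, and which satisfies (NK).
   Context: All rings are associative with unit. A right ideal is nil if all its elements are nilpotent. A ring satisfies the condition (NK) if it contains two nil right ideals whose sum is not nil. An element $a$ of a ring $R$ is principally nilpotent if $aR$ is a nil right ideal. *)

From HB Require Import structures.
From mathcomp Require Import all_boot all_order all_algebra.
Set Implicit Arguments. Unset Strict Implicit. Unset Printing Implicit Defensive.
Import GRing.Theory.
Local Open Scope ring_scope.

Definition nilpotent_el (R : nzRingType) (x : R) : Prop := exists n : nat, x ^+ n = 0.

Definition right_ideal (R : nzRingType) (I : R -> Prop) : Prop :=
  [/\ I 0, (forall x y, I x -> I y -> I (x - y)) & (forall x r, I x -> I (x * r))].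

Definition nil_set (R : nzRingType) (I : R -> Prop) : Prop :=
  forall x, I x -> nilpotent_el x.

Definition sum_set (R : nzRingType) (I J : R -> Prop) : R -> Prop :=
  fun z => exists x y, [/\ I x, J y & z = x + y].

Definition NK (R : nzRingType) : Prop :=
  exists I J : R -> Prop, [/\ right_ideal I, right_ideal J, nil_set I, nil_set J
                           & ~ nil_set (sum_set I J)].

Definition principal_right (R : nzRingType) (a : R) : R -> Prop :=
  fun z => exists r, z = a * r.

Definition princ_nilpotent (R : nzRingType) (a : R) : Prop :=
  right_ideal (principal_right a) /\ nil_set (principal_right a).

Definition subring_set (R : nzRingType) (S : R -> Prop) : Prop :=
  [/\ S 1, (forall x y, S x -> S y -> S (x - y)) & (forall x y, S x -> S y -> S (x * y))].

(* R is generated as a Z-algebra (= as a unital ring) by a and b: every element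
   lies in every subring containing a and b. *)
Definition Zalg_generated (R : nzRingType) (a b : R) : Prop :=
  forall x : R, forall S : R -> Prop, subring_set S -> S a -> S b -> S x.

(* subalgebra over Z_p (for a ring with p 1 = 0): a subring closed under the
   Z_p-action; the Z_p action is by the images of integers, so closed automatically,
   but we spell it out. *)
Definition Zp_subalg (p : nat) (R : nzRingType) (S : R -> Prop) : Prop :=
  subring_set S /\ (forall (k : nat) x, S x -> S (x *+ (k %% p))).

Definition Zpalg_generated (p : nat) (R : nzRingType) (a b : R) : Prop :=
  forall x : R, forall S : R -> Prop, Zp_subalg p S -> S a -> S b -> S x.

(* Pick x in I and y in J with x + y not nilpotent, and pass to the subring A of R
   generated by x and y.  The right ideals xA and yA of A lie inside I and J,
   hence are nil, so x and y are principally nilpotent in A; their sum is still not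
   nilpotent, so xA and yA witness (NK) in A, and A is generated over Z by x and y. *)
From HB Require Import structures.
From mathcomp Require Import all_boot all_order all_algebra.
From Stdlib Require Import ClassicalEpsilon Classical.
Set Implicit Arguments. Unset Strict Implicit. Unset Printing Implicit Defensive.
Local Open Scope ring_scope.
Import GRing.Theory.

Lemma principal_right_ideal (A : nzRingType) (a : A) : right_ideal (principal_right a).
Proof.
split.
- by exists 0; rewrite mulr0.
- by move=> _ _ [r ->] [s ->]; exists (r - s); rewrite mulrBr.
- by move=> _ t [r ->]; exists (r * t); rewrite mulrA.
Qed.

Lemma NK_princ_nilpotent (A : nzRingType) (a b : A) :
  princ_nilpotent a -> princ_nilpotent b -> ~ nilpotent_el (a + b) -> NK A.
Proof.
move=> [aR_ideal aR_nil] [bR_ideal bR_nil] not_nil_ab.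
exists (principal_right a), (principal_right b); split=> // sum_nil.
apply/not_nil_ab/sum_nil; exists a, b.
by split=> //; exists 1; rewrite mulr1.
Qed.

Lemma nilpotent_rmorph (A R : nzRingType) (f : {rmorphism A -> R}) (u : A) :
  nilpotent_el u -> nilpotent_el (f u).
Proof. by move=> [n un0]; exists n; rewrite -rmorphXn un0 rmorph0. Qed.

(* f (u * r) = f u * f r lies in I, and f is injective. *)
Lemma princ_nilpotent_rmorph (A R : nzRingType) (f : {rmorphism A -> R}) (u : A)
    (I : R -> Prop) :
  injective f -> right_ideal I -> nil_set I -> I (f u) -> princ_nilpotent u.
Proof.
move=> f_inj [_ _ I_mulr] I_nil Ifu; split; first exact: principal_right_ideal.
move=> _ [r ->]; have [n fur_n0] := I_nil _ (I_mulr _ (f r) Ifu).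
by exists n; apply: f_inj; rewrite rmorphXn rmorphM fur_n0 rmorph0.
Qed.

Section GeneratedSubring.
Variables (R : nzRingType) (a b : R).

Definition in_generated (x : R) : Prop :=
  forall S : R -> Prop, subring_set S -> S a -> S b -> S x.

Definition in_generatedb (x : R) : bool :=
  if excluded_middle_informative (in_generated x) then true else false.

Lemma in_generatedP x : reflect (in_generated x) (in_generatedb x).
Proof. by rewrite /in_generatedb; case: excluded_middle_informative; constructor. Qed.

Lemma in_generated_subring_closed : subring_closed in_generatedb.
Proof.
split.
- by apply/in_generatedP => S [].
- move=> x y /in_generatedP Sx /in_generatedP Sy.
  apply/in_generatedP => S S_ring Sa Sb; case: (S_ring) => _ S_sub _.
  exact: S_sub (Sx S _ Sa Sb) (Sy S _ Sa Sb).
- move=> x y /in_generatedP Sx /in_generatedP Sy.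
  apply/in_generatedP => S S_ring Sa Sb; case: (S_ring) => _ _ S_mul.
  exact: S_mul (Sx S _ Sa Sb) (Sy S _ Sa Sb).
Qed.

Record generated := Generated {gen_val : R; _ : in_generatedb gen_val}.
HB.instance Definition _ := [isSub for gen_val].
HB.instance Definition _ := [Choice of generated by <:].
HB.instance Definition _ :=
  GRing.isSubringClosed.Build R in_generatedb in_generated_subring_closed.
HB.instance Definition _ := [SubChoice_isSubNzRing of generated by <:].

Definition gen_a : generated :=
  @Generated a (introT (in_generatedP a) (fun _ _ Sa _ => Sa)).
Definition gen_b : generated :=
  @Generated b (introT (in_generatedP b) (fun _ _ _ Sb => Sb)).

Definition gen_val_rmorphism : {rmorphism generated -> R} := val.

Lemma gen_val_inj : injective gen_val_rmorphism.
Proof. exact: val_inj. Qed.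

(* A subring S of [generated] is pulled back to the subring of R of values whose
   proof of membership is in S; that subring contains a and b, hence everything. *)
Lemma generated_Zalg_generated : Zalg_generated gen_a gen_b.
Proof.
move=> u S [S1 S_sub S_mul] Sa Sb.
pose S' r := exists h : in_generatedb r, S (@Generated r h).
have S'_val v : S v -> S' (val v) by case: v => r hr Sv; exists hr.
have S_val v : S' (val v) -> S v.
  by case: v => r hr [hr' S_hr']; rewrite (bool_irrelevance hr hr').
apply: S_val; apply: (elimT (in_generatedP _) (valP u)); last 2 first.
- exact: S'_val _ Sa.
- exact: S'_val _ Sb.
- split; first by rewrite -(rmorph1 gen_val_rmorphism); apply: S'_val.
  + move=> r s [hr Sr] [hs Ss]; have := S'_val _ (S_sub _ _ Sr Ss).
    by rewrite [val _]rmorphB.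
  + move=> r s [hr Sr] [hs Ss]; have := S'_val _ (S_mul _ _ Sr Ss).
    by rewrite [val _]rmorphM.
Qed.

End GeneratedSubring.

Lemma NK_not_nilpotent_sum (R : nzRingType) : NK R ->
  exists I J : R -> Prop, exists x y,
    [/\ right_ideal I, right_ideal J, nil_set I, nil_set J
      & [/\ I x, J y & ~ nilpotent_el (x + y)]].
Proof.
move=> [I [J [I_ideal J_ideal I_nil J_nil not_sum_nil]]].
exists I, J; apply: NNPP => no_witness; apply: not_sum_nil => _ [x [y [Ix Jy ->]]].
by apply: NNPP => not_nil; apply: no_witness; exists x, y.
Qed.

Theorem mainTheorem4 :
  (exists R : nzRingType, NK R) ->
  exists (A : nzRingType) (a b : A),
    [/\ princ_nilpotent a, princ_nilpotent b,
        (Zalg_generated a b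
         \/ exists p : nat, [/\ prime p, (p%:R : A) = 0 & Zpalg_generated p a b])
      & NK A].
Proof.
move=> [R /NK_not_nilpotent_sum [I [J [x [y [I_ideal J_ideal I_nil J_nil]]]]]].
move=> [Ix Jy not_nil_xy].
have inj := @gen_val_inj _ x y.
have x_pn := princ_nilpotent_rmorph (u := gen_a x y) inj I_ideal I_nil Ix.
have y_pn := princ_nilpotent_rmorph (u := gen_b x y) inj J_ideal J_nil Jy.
exists (generated x y), (gen_a x y), (gen_b x y); split=> //.
- by left; exact: generated_Zalg_generated.
- apply: NK_princ_nilpotent x_pn y_pn _.
  by move=> /(nilpotent_rmorph (gen_val_rmorphism x y)); rewrite rmorphD.
Qed.
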